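(* Every finite connected graph that is both geodetic and ptolemaic is diagonal.
   Context: $d$ denotes shortest-path distance. A graph is geodetic if between any two vertices there is exactly one shortest path. It is ptolemaic if $d(x,y)d(z,w)+d(y,z)d(x,w)\ge d(x,z)d(y,w)$ for all vertices $x,y,z,w$. For vertices $x_0,\dots,x_k$ put $\ell(x_0,\dots,x_k)=\sum_{i=0}^{k-1}d(x_i,x_{i+1})$. The magnitude chain complex: $\mathrm{MC}_{k,l}(G)$ is the free abelian group on $I_{k,l}(G)=\{(x_0,\dots,x_k)\in V(G)^{k+1}: x_i\neq x_{i+1}\ \forall i,\ \ell=l\}$, with differential $\partial=\sum_{i=1}^{k-1}(-1)^i\partial_i$, where $\partial_i$ deletes $x_i$ if this does not change $\ell$ and is $0$ otherwise. Magnitude homology: $\mathrm{MH}_{k,l}(G)=H_k(\mathrm{MC}_{*,l}(G))$. $G$ is diagonal if $\mathrm{MH}_{k,l}(G)=0$ whenever $k\ne l$. *)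

From HB Require Import structures.
From mathcomp Require Import all_boot all_order all_algebra.
Set Implicit Arguments. Unset Strict Implicit. Unset Printing Implicit Defensive.
Import GRing.Theory Num.Theory.

(* A finite simple graph: vertex type T : finType, adjacency e : rel T,
   assumed symmetric and irreflexive in the theorem. *)

Definition walkn (T : finType) (e : rel T) (n : nat) (x y : T) : bool :=
  [exists p : n.-tuple T, path e x p && (last x p == y)].

(* shortest-path distance: least n with a walk of length n from x to y
   (searching n < #|T|, which suffices for connected graphs) *)
Definition dist (T : finType) (e : rel T) (x y : T) : nat :=
  find (fun n => walkn e n x y) (iota 0 #|T|).

(* p (the vertices after x) is a shortest path from x to y *)
Definition geodesic (T : finType) (e : rel T) (x y : T) (p : seq T) : bool :=
  [&& path e x p, last x p == y & size p == dist e x y].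

Definition geodetic (T : finType) (e : rel T) : Prop :=
  forall x y : T, exists p : seq T,
    geodesic e x y p /\ forall q : seq T, geodesic e x y q -> q = p.

Definition ptolemaic (T : finType) (e : rel T) : Prop :=
  forall x y z w : T,
    dist e x z * dist e y w <= dist e x y * dist e z w + dist e y z * dist e x w.

Definition ell (T : finType) (e : rel T) (s : seq T) : nat :=
  sumn [seq dist e p.1 p.2 | p <- zip s (behead s)].

Definition inI (T : finType) (e : rel T) (l : nat) (s : seq T) : bool :=
  all (fun p => p.1 != p.2) (zip s (behead s)) && (ell e s == l).

Definition delete (T : Type) (i : nat) (s : seq T) : seq T :=
  take i s ++ drop i.+1 s.

(* coefficient of generator y in the boundary of generator x (x has k+1 entries):
   sum_{i=1}^{k-1} (-1)^i [partial_i x = y] where partial_i x = delete i x if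
   this preserves ell, and 0 otherwise. *)
Definition face_coef (T : finType) (e : rel T) (k : nat)
    (x : k.+1.-tuple T) (y : k.-tuple T) : int :=
  (\sum_(1 <= i < k)
     (if (delete i (tval x) == tval y) && (ell e (delete i (tval x)) == ell e (tval x))
      then (-1) ^+ i else 0))%R.

(* chains in MC_k are integer functions on (k+1)-tuples; the differential *)
Definition bd (T : finType) (e : rel T) (k : nat)
    (c : {ffun k.+1.-tuple T -> int}) : {ffun k.-tuple T -> int} :=
  [ffun y => (\sum_(x : k.+1.-tuple T) c x * face_coef e x y)%R].

Definition inMC (T : finType) (e : rel T) (k l : nat)
    (c : {ffun k.+1.-tuple T -> int}) : Prop :=
  forall x, c x != 0%R -> inI e l (tval x).

Definition MH_vanishes (T : finType) (e : rel T) (k l : nat) : Prop :=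
  forall c : {ffun k.+1.-tuple T -> int},
    inMC e l c -> bd e c = 0%R ->
    exists b : {ffun k.+2.-tuple T -> int}, inMC e l b /\ bd e b = c.

Definition diagonal (T : finType) (e : rel T) : Prop :=
  forall k l : nat, k != l -> MH_vanishes e k l.

From HB Require Import structures.
From mathcomp Require Import all_boot all_order all_algebra.
From mathcomp Require Import zify.
Set Implicit Arguments. Unset Strict Implicit. Unset Printing Implicit Defensive.
Import GRing.Theory Num.Theory.

(* For k > l the group MC_{k,l} is zero, since consecutive entries are distinct
   and hence ell(x_0, ..., x_k) >= k.  For k < l every generator of MC_{k,l} has
   a long step, i.e. consecutive entries at distance >= 2, and on generators with
   a long step we build a chain homotopy H with dH + Hd = id, so every cycle is a
   boundary.  H scans the tuple from the left: at the first long step x_i x_{i+1}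
   it inserts the first vertex of the geodesic from x_i to x_{i+1} (unique, as the
   graph is geodetic); it vanishes if before that some unit step x_{i-1} x_i
   continues geodesically, i.e. x_{i-1} is at distance 2 from the first vertex of
   the geodesic from x_i to x_{i+1}.  Ptolemy's inequality shows that such a
   continuation makes the whole of x_{i-1}, x_i, ..., x_{i+1} geodesic, which is
   what lets the face maps commute with H. *)

Section GeodeticPtolemaic.
Variables (T : finType) (e : rel T).
Hypothesis e_sym : symmetric e.
Hypothesis e_irr : irreflexive e.
Hypothesis e_conn : forall x y : T, connect e x y.
Hypothesis e_geo : geodetic e.
Hypothesis e_pto : ptolemaic e.

Local Notation d := (dist e).

(** * Distance and geodesics *)

Lemma walknP n x y :
  reflect (exists p : seq T, [/\ size p = n, path e x p & last x p = y])
          (walkn e n x y).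
Proof.
apply: (iffP existsP) => [[p /andP[pp /eqP lp]]|[p [sp pp lp]]].
  by exists (tval p); rewrite size_tuple.
have sp' : size p == n by rewrite sp.
by exists (Tuple sp'); rewrite /= pp lp eqxx.
Qed.

Lemma dist_spec x y : d x y < #|T| /\ walkn e (d x y) x y.
Proof.
have [p pp lp] := connectP (e_conn x y).
rewrite lp; case: (shortenP pp) => p' pp' up' _.
have szp : size p' < #|T|.
  by have := max_card (mem (x :: p')); rewrite (card_uniqP up').
have hw : walkn e (size p') x (last x p') by apply/walknP; exists p'.
have hh : has (fun n => walkn e n x (last x p')) (iota 0 #|T|).
  by apply/hasP; exists (size p') => //; rewrite mem_iota.
have hf := hh; rewrite has_find size_iota in hf.
rewrite /dist; split => //.
by have := nth_find 0 hh; rewrite nth_iota // add0n.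
Qed.

Lemma walkn_dist x y : walkn e (d x y) x y.
Proof. by case: (dist_spec x y). Qed.

Lemma dist_min n x y : walkn e n x y -> d x y <= n.
Proof.
move=> w; case: (ltnP n #|T|) => hn; last first.
  by have [h _] := dist_spec x y; apply: leq_trans (ltnW h) hn.
rewrite leqNgt; apply/negP => lt.
by have := before_find 0 lt; rewrite nth_iota // add0n w.
Qed.

Lemma walkn_cat a b x y z :
  walkn e a x y -> walkn e b y z -> walkn e (a + b) x z.
Proof.
move=> /walknP[p [sp pp lp]] /walknP[q [sq pq lq]]; apply/walknP.
by exists (p ++ q); rewrite size_cat sp sq cat_path last_cat pp lp pq lq.
Qed.

Lemma dist_triangle x y z : d x z <= d x y + d y z.
Proof. by apply/dist_min/(walkn_cat (walkn_dist x y) (walkn_dist y z)). Qed.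

Lemma walkn_sym n x y : walkn e n x y -> walkn e n y x.
Proof.
move=> /walknP[p [sp pp lp]]; apply/walknP.
exists (rev (belast x p)); rewrite size_rev size_belast sp; split => //.
  by rewrite -lp rev_path; apply: sub_path pp => u v; rewrite e_sym.
by case: p sp pp lp => [|a p] _ _ /= <- //; rewrite rev_cons last_rcons.
Qed.

Lemma dist_sym x y : d x y = d y x.
Proof.
by apply/eqP; rewrite eqn_leq !dist_min // walkn_sym // walkn_dist.
Qed.

Lemma dist_eq0 x y : (d x y == 0) = (x == y).
Proof.
apply/eqP/eqP => [h|->].
  by have /walknP[p [sp _ lp]] := walkn_dist x y; move: sp lp; rewrite h; case: p.
by apply/eqP; rewrite -leqn0; apply: dist_min; apply/walknP; exists [::].
Qed.

Lemma distxx x : d x x = 0.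
Proof. by apply/eqP; rewrite dist_eq0. Qed.

Lemma dist_gt0 x y : (0 < d x y) = (x != y).
Proof. by rewrite lt0n dist_eq0. Qed.

Lemma edge_dist1 x y : e x y -> d x y = 1.
Proof.
move=> exy; apply/eqP; rewrite eqn_leq dist_gt0 andbC; apply/andP; split.
  by apply/eqP => h; rewrite h e_irr in exy.
by apply: dist_min; apply/walknP; exists [:: y]; rewrite /= exy.
Qed.

Lemma dist1_edge x y : d x y = 1 -> e x y.
Proof.
move=> h; have /walknP[p [sp pp lp]] := walkn_dist x y; move: sp pp lp; rewrite h.
by case: p => [|a [|]] //= _; rewrite andbT => ? <-.
Qed.

Lemma neq_dist1 x y : x != y -> d x y <= 1 -> d x y = 1.
Proof. by rewrite -dist_gt0; lia. Qed.

Lemma geodesic_step x y : x != y -> exists m, e x m /\ (d m y).+1 = d x y.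
Proof.
move=> nxy; have /walknP[p [sp pp lp]] := walkn_dist x y.
case: p sp pp lp => [|m p] /=; first by move=> _ _ lp; move: nxy; rewrite lp eqxx.
move=> sp /andP[exm pp] lp; exists m; split => //.
apply/eqP; rewrite eqn_leq; apply/andP; split.
  by rewrite -sp ltnS; apply: dist_min; apply/walknP; exists p.
by rewrite (leq_trans (dist_triangle x m y)) // edge_dist1.
Qed.

Lemma geodesic_step_uniq x y m1 m2 :
  e x m1 -> (d m1 y).+1 = d x y -> e x m2 -> (d m2 y).+1 = d x y -> m1 = m2.
Proof.
move=> e1 h1 e2 h2.
have geo m : e x m -> (d m y).+1 = d x y -> exists p, geodesic e x y (m :: p).
  move=> em hm; have /walknP[p [sp pp lp]] := walkn_dist m y.
  by exists p; rewrite /geodesic /= em pp lp sp hm !eqxx.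
have [q [_ qu]] := e_geo x y.
have [p1 g1] := geo _ e1 h1; have [p2 g2] := geo _ e2 h2.
by have := qu _ g1; rewrite -(qu _ g2) => -[].
Qed.

(* The vertex after x on the geodesic from x to y; the junk value x for x = y
   is never used. *)
Definition next_step x y : T :=
  odflt x [pick m | e x m && ((d m y).+1 == d x y)].

Lemma next_stepP x y :
  x != y -> e x (next_step x y) /\ (d (next_step x y) y).+1 = d x y.
Proof.
move=> nxy; rewrite /next_step; case: pickP => [m /andP[? /eqP ?]|h] //=.
have [m [em hm]] := geodesic_step nxy; by have := h m; rewrite em hm eqxx.
Qed.

Lemma next_step_uniq x y m : e x m -> (d m y).+1 = d x y -> next_step x y = m.
Proof.
move=> em hm; have nxy : x != y.
  by apply/negP => /eqP h; move: hm; rewrite h distxx.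
have [e1 h1] := next_stepP nxy; exact: geodesic_step_uniq e1 h1 em hm.
Qed.

Lemma next_step_dist1 x y : d x y = 1 -> next_step x y = y.
Proof. by move=> h; apply: next_step_uniq; rewrite ?distxx ?h // dist1_edge. Qed.

Lemma next_step_between a b c :
  a != b -> d a c = d a b + d b c -> next_step a c = next_step a b.
Proof.
move=> nab h; have [e1 h1] := next_stepP nab; apply: next_step_uniq => //.
have t1 := dist_triangle (next_step a b) b c.
have t2 := dist_triangle a (next_step a b) c.
rewrite (edge_dist1 e1) in t2; lia.
Qed.

Lemma dist_next_step_beyond a b c :
  b != c -> d a c = d a b + d b c -> d a (next_step b c) = (d a b).+1.
Proof.
move=> nbc h; have [e1 h1] := next_stepP nbc.
have t1 := dist_triangle a b (next_step b c).
have t2 := dist_triangle a (next_step b c) c.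
rewrite (edge_dist1 e1) in t1; lia.
Qed.

(* Induction on d m w, peeling off the last vertex v of the geodesic from m to
   w: Ptolemy's inequality on (a, m, v, w) with d a v = d m v + 1 forces
   d a w = d m w + 1. *)
Lemma geodesic_extension a m w :
  d a m = 1 -> 0 < d m w -> d a (next_step m w) = 2 -> d a w = (d m w).+1.
Proof.
move=> ham; move Hn: (d m w) => n; elim: n m w ham Hn => [|n IH] m w ham Hn // _.
case: n IH Hn => [|n] IH Hn; first by rewrite (next_step_dist1 Hn).
move=> h2.
have nwm : w != m by rewrite eq_sym -dist_eq0 Hn.
have [ewv] := next_stepP nwm; move: (next_step w m) ewv => v ewv hv.
rewrite (dist_sym w m) Hn in hv.
have hmv : d m v = n.+1 by rewrite dist_sym; lia.
have dvw : d v w = 1 by rewrite dist_sym (edge_dist1 ewv).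
have nmv : m != v by rewrite -dist_eq0 hmv.
have hav : d a v = n.+2.
  apply: (IH m v ham hmv (ltn0Sn _)).
  by rewrite -(@next_step_between m v w) // Hn hmv dvw addn1.
have := e_pto a m v w; rewrite hav Hn ham dvw hmv.
have := dist_triangle a m w; rewrite ham Hn.
nia.
Qed.

Lemma between_next_step a b c : 1 < d a b -> b != c ->
  (d (next_step a b) c == d (next_step a b) b + d b c) =
  (d a c == d a b + d b c).
Proof.
move=> hab nbc.
have nab : a != b by rewrite -dist_gt0 (ltn_trans _ hab).
have [eam] := next_stepP nab; have ham := edge_dist1 eam.
move: (next_step a b) eam ham => m eam ham hm.
have nmb : m != b by rewrite -dist_gt0; lia.
have := dist_triangle a m c; have := dist_triangle m b c.
have : 0 < d b c by rewrite dist_gt0.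
move=> dbc t2 t1; apply/eqP/eqP => h; last by lia.
have h2 : d a (next_step m c) = 2.
  by rewrite (next_step_between nmb h) (dist_next_step_beyond nmb) ?ham //; lia.
have := geodesic_extension ham _ h2; lia.
Qed.

Definition steps_distinct (s : seq T) := all (fun p => p.1 != p.2) (zip s (behead s)).
Definition has_long_step (s : seq T) :=
  has (fun p => 1 < d p.1 p.2) (zip s (behead s)).

Lemma steps_distinct_cons a b r :
  steps_distinct (a :: b :: r) = (a != b) && steps_distinct (b :: r).
Proof. by []. Qed.

Lemma has_long_step_cons a b r :
  has_long_step (a :: b :: r) = (1 < d a b) || has_long_step (b :: r).
Proof. by []. Qed.

Lemma ell_cons a b w : ell e (a :: b :: w) = d a b + ell e (b :: w).
Proof. by []. Qed.

Lemma ell_delete1 a b c w :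
  (ell e (a :: c :: w) == ell e (a :: b :: c :: w)) = (d a c == d a b + d b c).
Proof. by rewrite !ell_cons addnA eqn_add2r. Qed.

Lemma size_le_ell s : steps_distinct s -> (size s).-1 <= ell e s.
Proof.
elim: s => [|a [|b r] IH] //=; rewrite steps_distinct_cons => /andP[nab h].
by rewrite ell_cons; have := IH h; rewrite -dist_gt0 in nab; move: nab => /=; lia.
Qed.

Lemma ell_le_size s : ~~ has_long_step s -> ell e s <= (size s).-1.
Proof.
elim: s => [|a [|b r] IH] //=; rewrite has_long_step_cons negb_or => /andP[hab h].
by rewrite ell_cons; have := IH h; rewrite -leqNgt in hab; move: hab => /=; lia.
Qed.

(** * The boundary and the homotopy, paired with a test function *)

(* [bd_pair g s] is the value of the test function g on the boundary of the
   generator s; testing against indicators recovers [bd]. *)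
Definition bd_pair (g : seq T -> int) (s : seq T) : int :=
  (\sum_(1 <= i < (size s).-1)
     (if ell e (delete i s) == ell e s then (-1) ^+ i * g (delete i s) else 0))%R.

Lemma bd_pair_cons2 g a b r :
  bd_pair g (a :: b :: r) =
  ((if r is _ :: _ then
     (if ell e (a :: r) == ell e (a :: b :: r) then - g (a :: r) else 0) else 0)
   - bd_pair (fun w => g (a :: w)) (b :: r))%R.
Proof.
rewrite /bd_pair /=; case: r => [|c r]; first by rewrite !big_geq // subr0.
rewrite big_ltn //= big_add1 /= expr1 mulN1r.
congr (_ + _)%R; rewrite -sumrN; apply: eq_big_nat => -[|i] // _.
rewrite /delete /= !ell_cons eqn_add2l.
by case: ifP => _; rewrite ?oppr0 // exprS mulN1r mulNr.
Qed.

Lemma eq_bd_pair_cons g g' c r : (forall w, g (c :: w) = g' (c :: w)) ->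
  bd_pair g (c :: r) = bd_pair g' (c :: r).
Proof.
by move=> h; apply: eq_big_nat => -[|i] // _; rewrite /delete /= h.
Qed.

Lemma bd_pairN g s : bd_pair (fun w => - g w)%R s = (- bd_pair g s)%R.
Proof.
rewrite /bd_pair -sumrN; apply: eq_bigr => i _.
by case: ifP => _; rewrite ?mulrN ?oppr0.
Qed.

Lemma bd_pair0 s : bd_pair (fun _ => 0%R) s = 0%R.
Proof. by rewrite /bd_pair big1 // => i _; case: ifP => _; rewrite ?mulr0. Qed.

(* [hmt_gen s] is [Some (p, z)] when H s = (-1)^p z, and [None] when H s = 0;
   p is the position of the inserted vertex. *)
Fixpoint hmt_gen (s : seq T) : option (nat * seq T) :=
  match s with
  | a :: ((b :: r) as t) =>
    if 1 < d a b then Some (1, a :: next_step a b :: t)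
    else if (if r is c :: _ then d a (next_step b c) == 2 else false) then None
    else omap (fun pz => (pz.1.+1, a :: pz.2)) (hmt_gen t)
  | _ => None
  end.

Definition hmt_pair (g : seq T -> int) (s : seq T) : int :=
  if hmt_gen s is Some (p, z) then ((-1) ^+ p * g z)%R else 0%R.

Lemma hmt_gen_cons2 a b r : hmt_gen (a :: b :: r) =
    if 1 < d a b then Some (1, a :: next_step a b :: b :: r)
    else if (if r is c :: _ then d a (next_step b c) == 2 else false) then None
    else omap (fun pz => (pz.1.+1, a :: pz.2)) (hmt_gen (b :: r)).
Proof. by []. Qed.

Lemma hmt_pair_long g a b w : 1 < d a b ->
  hmt_pair g (a :: b :: w) = (- g (a :: next_step a b :: b :: w))%R.
Proof. by move=> h; rewrite /hmt_pair /= h expr1 mulN1r. Qed.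

Lemma hmt_pair_stop g a b c w : d a b <= 1 -> d a (next_step b c) = 2 ->
  hmt_pair g (a :: b :: c :: w) = 0%R.
Proof. by move=> h1 h2; rewrite /hmt_pair /= ltnNge h1 /= h2 eqxx. Qed.

Lemma hmt_gen_shift a b c w : d a b <= 1 -> d a (next_step b c) != 2 ->
  hmt_gen (a :: b :: c :: w) =
  omap (fun pz => (pz.1.+1, a :: pz.2)) (hmt_gen (b :: c :: w)).
Proof. by move=> h1 h2; rewrite [LHS]/= ltnNge h1 /= (negbTE h2). Qed.

Lemma hmt_pair_shift g a b c w : d a b <= 1 -> d a (next_step b c) != 2 ->
  hmt_pair g (a :: b :: c :: w) = (- hmt_pair (fun z => g (a :: z)) (b :: c :: w))%R.
Proof.
move=> h1 h2; rewrite /hmt_pair hmt_gen_shift //.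
case: (hmt_gen _) => [[p z]|] /=; last by rewrite oppr0.
by rewrite exprS mulN1r mulNr.
Qed.

Lemma hmt_gen_spec s p z : hmt_gen s = Some (p, z) ->
  [/\ size z = (size s).+1, ell e z = ell e s,
      steps_distinct s -> steps_distinct z &
      exists a s' z', s = a :: s' /\ z = a :: z'].
Proof.
elim: s p z => [|a [|b r] IH] p z //; rewrite hmt_gen_cons2; case: ifP => hab.
  case=> _ <-.
  have nab : a != b by rewrite -dist_gt0 (ltn_trans _ hab).
  have [eam hm] := next_stepP nab.
  split => //.
  - by rewrite !ell_cons (edge_dist1 eam) addnA add1n hm.
  - rewrite !steps_distinct_cons => /andP[_ ->]; rewrite andbT -!dist_gt0.
    by rewrite (edge_dist1 eam) /= -ltnS hm.
  - by exists a, (b :: r), (next_step a b :: b :: r).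
case: ifP => // _.
case E: (hmt_gen (b :: r)) => [[p' z']|] //= [_ <-].
have [h1 h2 h3 [b' [s' [z'' [[<- _] hz]]]]] := IH _ _ E.
rewrite hz in h1 h2 h3 *; split => //.
- by rewrite /= -h1.
- by rewrite !ell_cons h2.
- by rewrite !steps_distinct_cons => /andP[-> /h3].
- by exists a, (b :: r), (b :: z'').
Qed.

Lemma hmt_gen_head b c r p z : b != c -> hmt_gen (b :: c :: r) = Some (p, z) ->
  exists z', z = b :: next_step b c :: z'.
Proof.
move=> nbc; rewrite hmt_gen_cons2; case: ifP => hbc.
  by case=> _ <-; exists (c :: r).
case: ifP => // _.
case E: (hmt_gen (c :: r)) => [[p' z']|] //= [_ <-].
have [_ _ _ [c' [s' [z'' [[<- _] ->]]]]] := hmt_gen_spec E.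
have h1 : d b c <= 1 by rewrite leqNgt hbc.
by rewrite (next_step_dist1 (neq_dist1 nbc h1)); exists z''.
Qed.

Lemma hmt_bd_shift f a b c r : d a b = 1 -> d a (next_step b c) != 2 -> b != c ->
  hmt_pair (bd_pair f) (a :: b :: c :: r) =
  hmt_pair (bd_pair (fun z => f (a :: z))) (b :: c :: r).
Proof.
move=> h1 h2 nbc; rewrite /hmt_pair hmt_gen_shift ?h1 //.
case E: (hmt_gen (b :: c :: r)) => [[p z]|] //=.
have [z' ->] := hmt_gen_head nbc E.
have [ebn _] := next_stepP nbc.
rewrite bd_pair_cons2 ell_delete1 h1 (edge_dist1 ebn) (negbTE h2) sub0r.
by rewrite exprS mulN1r mulNr mulrN opprK.
Qed.

Lemma bd_hmt_shift f a b c r : d a b = 1 -> d a (next_step b c) != 2 -> b != c ->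
  bd_pair (fun w => hmt_pair f (a :: w)) (b :: c :: r) =
  (- bd_pair (hmt_pair (fun z => f (a :: z))) (b :: c :: r))%R.
Proof.
move=> h1 h2 nbc; have h1' : d a b <= 1 by rewrite h1.
rewrite !bd_pair_cons2.
rewrite (@eq_bd_pair_cons _
  (fun w => - hmt_pair (fun z => f (a :: z)) (b :: w))%R); last first.
  by move=> w /=; rewrite hmt_pair_shift.
rewrite bd_pairN; case: r => [|c' r] /=; first by lia.
rewrite ell_delete1; case: ifP => h; last by lia.
rewrite hmt_pair_shift //; last by rewrite (next_step_between nbc (eqP h)).
lia.
Qed.

Lemma hmt_bd_long f a b r : 1 < d a b -> steps_distinct (a :: b :: r) ->
  (hmt_pair (bd_pair f) (a :: b :: r) + bd_pair (hmt_pair f) (a :: b :: r) =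
   f (a :: b :: r))%R.
Proof.
move=> hab; rewrite steps_distinct_cons => /andP[nab dr].
have [eam hm] := next_stepP nab; have ham := edge_dist1 eam.
have hc : d a b == d a (next_step a b) + d (next_step a b) b by rewrite ham -hm.
rewrite hmt_pair_long // bd_pair_cons2 ell_delete1 hc.
rewrite bd_pair_cons2 [bd_pair (hmt_pair f) _]bd_pair_cons2.
rewrite (@eq_bd_pair_cons (fun w => hmt_pair f (a :: w))
  (fun w => - f (a :: next_step a b :: w))%R); last first.
  by move=> w /=; rewrite hmt_pair_long.
rewrite bd_pairN; case: r dr => [|c r] dr; first by lia.
have nbc : b != c by move: dr; rewrite steps_distinct_cons => /andP[].
rewrite !ell_delete1 (between_next_step hab nbc); case: ifP => h; last by lia.
rewrite hmt_pair_long; last by rewrite (eqP h) (leq_trans hab) ?leq_addr.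
by rewrite (next_step_between nab (eqP h)); lia.
Qed.

Lemma hmt_bd_stop f a b c r : d a b = 1 -> b != c -> d a (next_step b c) = 2 ->
  (hmt_pair (bd_pair f) (a :: b :: c :: r) +
   bd_pair (hmt_pair f) (a :: b :: c :: r) = f (a :: b :: c :: r))%R.
Proof.
move=> hab1 nbc h2.
have hac : d a c = d a b + d b c.
  by rewrite hab1 (geodesic_extension hab1 _ h2) ?dist_gt0.
rewrite hmt_pair_stop ?hab1 // add0r bd_pair_cons2 ell_delete1 hac eqxx.
rewrite hmt_pair_long; last by rewrite hac hab1; have := dist_gt0 b c; rewrite nbc; lia.
rewrite (next_step_between _ hac) -?dist_gt0 ?hab1 // (next_step_dist1 hab1).
rewrite bd_pair_cons2 (@eq_bd_pair_cons _ (fun _ => 0%R)) ?bd_pair0; last first.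
  by move=> w /=; rewrite hmt_pair_stop ?hab1.
case: r => [|c' r] /=; first by lia.
rewrite ell_delete1; case: ifP => h; last by lia.
by rewrite hmt_pair_stop ?hab1 //; [lia | rewrite (next_step_between nbc (eqP h))].
Qed.

Lemma hmt_bd_id s : steps_distinct s -> has_long_step s ->
  forall f, (hmt_pair (bd_pair f) s + bd_pair (hmt_pair f) s = f s)%R.
Proof.
elim: s => [|a [|b r] IH] // ds ls f.
case: (ltnP 1 (d a b)) => hab; first exact: hmt_bd_long.
move: ds; rewrite steps_distinct_cons => /andP[nab dr].
have hab1 : d a b = 1 := neq_dist1 nab hab.
case: r dr ls IH => [|c r] dr ls IH; first by move: ls; rewrite has_long_step_cons hab1.
have nbc : b != c by move: dr; rewrite steps_distinct_cons => /andP[].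
have [h2|h2] := eqVneq (d a (next_step b c)) 2; first exact: hmt_bd_stop.
have ls' : has_long_step (b :: c :: r) by move: ls; rewrite has_long_step_cons hab1.
have := IH dr ls' (fun z => f (a :: z)).
rewrite hmt_bd_shift // [bd_pair _ (a :: _)]bd_pair_cons2 ell_delete1.
have -> : (d a c == d a b + d b c) = false.
  by apply/negP => /eqP h; move: h2; rewrite (dist_next_step_beyond nbc h) hab1.
by rewrite bd_hmt_shift //; lia.
Qed.

Lemma sum_tuple_indicator n (s : seq T) (G : seq T -> int) : size s = n ->
  (\sum_(w : n.-tuple T) ((tval w == s)%:R * G (tval w)) = G s)%R.
Proof.
move=> hs; have sz : size s == n by rewrite hs.
rewrite (bigD1 (Tuple sz)) //= eqxx mul1r big1 ?addr0 // => w hw.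
case: eqP => h; last by rewrite mul0r.
by move: hw; rewrite (_ : w = Tuple sz) ?eqxx //; apply: val_inj.
Qed.

Lemma size_delete i (s : seq T) : i < size s -> size (delete i s) = (size s).-1.
Proof. by move=> hi; rewrite /delete size_cat size_take size_drop hi; lia. Qed.

Lemma sum_face_coef k (x : k.+1.-tuple T) (g : seq T -> int) :
  (\sum_(w : k.-tuple T) face_coef e x w * g (tval w) = bd_pair g (tval x))%R.
Proof.
rewrite /face_coef; under eq_bigr do rewrite mulr_suml.
rewrite exchange_big /bd_pair size_tuple /=.
apply: eq_big_nat => i /andP[hi1 hi2]; case: ifP => hsm; last first.
  by rewrite big1 // => w _; rewrite andbF mul0r.
under eq_bigr => w _.
  rewrite andbT (_ : _ * _ = (tval w == delete i x)%:R * ((-1) ^+ i * g (tval w)))%R;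
    last by rewrite eq_sym; case: eqP => _; rewrite ?mul1r ?mul0r.
  over.
by rewrite /= (@sum_tuple_indicator k _ (fun w => (-1) ^+ i * g w)%R)
  // size_delete size_tuple //; lia.
Qed.

Lemma face_coefE k (z : k.+1.-tuple T) (y : k.-tuple T) :
  face_coef e z y = bd_pair (fun w => (w == tval y)%:R%R) (tval z).
Proof.
rewrite /face_coef /bd_pair size_tuple /=; apply: eq_bigr => i _.
by case: (delete _ _ == _); case: (ell _ _ == _); rewrite /= ?mulr1 ?mulr0.
Qed.

Lemma sum_hmt_pair k (s : seq T) (G : seq T -> int) : size s = k.+1 ->
  (\sum_(z : k.+2.-tuple T) hmt_pair (fun w => (w == tval z)%:R%R) s * G (tval z)
   = hmt_pair G s)%R.
Proof.
move=> hs; rewrite /hmt_pair; case E: (hmt_gen s) => [[p z0]|]; last first.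
  by rewrite big1 // => z _; rewrite mul0r.
have [h1 _ _ _] := hmt_gen_spec E.
under eq_bigr do rewrite -mulrA [(z0 == _)]eq_sym.
by rewrite -mulr_sumr sum_tuple_indicator // h1 hs.
Qed.

Definition hmt k (c : {ffun k.+1.-tuple T -> int}) : {ffun k.+2.-tuple T -> int} :=
  [ffun z => \sum_x c x * hmt_pair (fun w => (w == tval z)%:R%R) (tval x)]%R.

Lemma sum_bd k (c : {ffun k.+1.-tuple T -> int}) (g : seq T -> int) :
  (\sum_(w : k.-tuple T) bd e c w * g (tval w) = \sum_x c x * bd_pair g (tval x))%R.
Proof.
under eq_bigr do rewrite ffunE mulr_suml.
rewrite exchange_big; apply: eq_bigr => x _.
by rewrite -sum_face_coef mulr_sumr; apply: eq_bigr => w _; rewrite mulrA.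
Qed.

Lemma bd_hmt k (c : {ffun k.+1.-tuple T -> int}) (y : k.+1.-tuple T) :
  bd e (hmt c) y =
  (\sum_x c x * hmt_pair (bd_pair (fun w => (w == tval y)%:R%R)) (tval x))%R.
Proof.
rewrite ffunE; under eq_bigr do rewrite ffunE face_coefE mulr_suml.
rewrite exchange_big; apply: eq_bigr => x _.
rewrite -(sum_hmt_pair _ (size_tuple x)) mulr_sumr.
by apply: eq_bigr => z _; rewrite mulrA.
Qed.

Lemma sum_delta k (c : {ffun k.+1.-tuple T -> int}) (y : k.+1.-tuple T) :
  (\sum_x c x * (tval x == tval y)%:R)%R = c y.
Proof.
rewrite (bigD1 y) //= eqxx mulr1 big1 ?addr0 // => x hx.
by rewrite (_ : (tval x == tval y) = false) ?mulr0 //; apply/negbTE.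
Qed.

Lemma hmt_inMC k l (c : {ffun k.+1.-tuple T -> int}) :
  inMC e l c -> inMC e l (hmt c).
Proof.
move=> hc z; rewrite ffunE => hz.
have /existsP[x hx] :
    [exists x, c x * hmt_pair (fun w => (w == tval z)%:R%R) (tval x) != 0]%R.
  move: hz; apply: contraR => /existsPn hn; apply/eqP.
  by apply: big1 => x _; apply/eqP; rewrite -[_ == _]negbK hn.
have /hc/andP[dx /eqP lx] : c x != 0%R by apply: contraNneq hx => ->; rewrite mul0r.
move: hx; rewrite /hmt_pair; case E: (hmt_gen (tval x)) => [[p z0]|]; last first.
  by rewrite mulr0 eqxx.
have [<- _ | _] := eqVneq z0 (tval z); last by rewrite mulr0n !mulr0 eqxx.
have [_ h2 h3 _] := hmt_gen_spec E.
by rewrite /inI h2 lx eqxx andbT; exact: h3 dx.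
Qed.

Lemma bd_hmt_cycle k l (c : {ffun k.+1.-tuple T -> int}) :
  inMC e l c -> k < l -> bd e c = 0%R -> bd e (hmt c) = c.
Proof.
move=> hc hkl bdc; apply/ffunP => y; rewrite bd_hmt -[RHS]sum_delta.
set g := fun w => (w == tval y)%:R%R.
have := sum_bd c (hmt_pair g); rewrite bdc big1 => [/esym h0|w _]; last first.
  by rewrite ffunE mul0r.
transitivity (\sum_x c x * hmt_pair (bd_pair g) (tval x) +
              \sum_x c x * bd_pair (hmt_pair g) (tval x))%R.
  by rewrite h0 addr0.
rewrite -big_split; apply: eq_bigr => x _ /=.
rewrite -mulrDr; have [->|/hc/andP[dx /eqP lx]] := eqVneq (c x) 0%R.
  by rewrite !mul0r.
rewrite hmt_bd_id //; apply: contraLR hkl => /ell_le_size.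
by rewrite size_tuple lx -leqNgt.
Qed.

Lemma inMC_eq0 k l (c : {ffun k.+1.-tuple T -> int}) :
  inMC e l c -> l < k -> c = 0%R.
Proof.
move=> hc hlk; apply/ffunP => x; rewrite ffunE; apply/eqP; apply: contraLR hlk.
move=> /hc/andP[dx /eqP lx]; have := size_le_ell dx.
by rewrite size_tuple lx -leqNgt.
Qed.

End GeodeticPtolemaic.

Theorem theoremB3 (T : finType) (e : rel T)
  (e_sym : symmetric e) (e_irr : irreflexive e)
  (e_conn : forall x y : T, connect e x y)
  (Hgeo : geodetic e) (Hpto : ptolemaic e) :
  diagonal e.
Proof.
move=> k l nkl c hc bdc; case: (ltngtP k l) => hkl; last by rewrite hkl eqxx in nkl.
- exists (hmt e c); split; first exact: hmt_inMC.
  exact: (bd_hmt_cycle e_sym e_irr e_conn Hgeo Hpto hc).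
- exists 0%R; split; first by move=> x; rewrite ffunE eqxx.
  rewrite (inMC_eq0 e_conn hc hkl); apply/ffunP => y.
  by rewrite !ffunE big1 // => x _; rewrite ffunE mul0r.
Qed.
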